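(* Let $S_X,S_Y$ be finite nonempty action sets, $\varphi:S_X\times S_Y\to\mathbb{R}$ and $\lambda\in[0,1)$. Suppose $\sigma_X:\mathcal{H}\to\Delta(S_X)$ is $(\varphi,\lambda)$-autocratic. Let $\mathcal{H}_Y=\bigcup_{t\ge0}S_Y^t$ (with $S_Y^0=\{\varnothing\}$ the empty history). Then there exists an opponent-conditioned strategy $\widetilde\sigma_X:\mathcal{H}_Y\to\Delta(S_X)$ that is also $(\varphi,\lambda)$-autocratic.
   Context: Two players $X,Y$ play a repeated game with finite action sets $S_X,S_Y$; $\Delta(S)$ denotes the probability distributions on $S$. Histories: $\mathcal{H}=\bigcup_{T\ge0}(S_X\times S_Y)^T$; behavioral strategies are maps $\sigma:\mathcal{H}\to\Delta(S)$; players independently draw actions each round from their strategies evaluated at the history of realized action pairs of previous rounds, with $\mathbb{E}_{\sigma_X,\sigma_Y}$ the expectation over the resulting play. An opponent-conditioned strategy $\widetilde\sigma_X:\mathcal{H}_Y\to\Delta(S_X)$ is the behavioral strategy that in round $t$ plays $\widetilde\sigma_X[s_Y^0,\dots,s_Y^{t-1}]$, where $s_Y^0,\dots,s_Y^{t-1}$ are $Y$'s realized past actions. A strategy $\sigma_X$ is $(\varphi,\lambda)$-autocratic if for every behavioral strategy $\sigma_Y$ of $Y$, $\mathbb{E}_{\sigma_X,\sigma_Y}\big[(1-\lambda)\sum_{t\ge0}\lambda^t\varphi(s_X^t,s_Y^t)\big]=0$. *)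

From mathcomp Require Import all_boot all_order all_algebra.
From mathcomp Require Import all_classical all_reals all_analysis.
Set Implicit Arguments. Unset Strict Implicit. Unset Printing Implicit Defensive.
Import Order.TTheory GRing.Theory Num.Theory.
Local Open Scope classical_set_scope.
Local Open Scope ring_scope.

Record distr (R : realType) (T : finType) := Distr {
  pmf :> T -> R;
  pmf_ge0 : forall x, 0 <= pmf x;
  pmf_sum1 : \sum_(x : T) pmf x = 1 }.

Definition history (SX SY : finType) := seq (SX * SY)%type.

Definition strategy (R : realType) (SX SY : finType) (S : finType) :=
  history SX SY -> distr R S.

Fixpoint hprob (R : realType) (SX SY : finType)
  (sX : strategy R SX SY SX) (sY : strategy R SX SY SY)
  (pre : history SX SY) (h : history SX SY) : R :=
  match h with
  | [::] => 1
  | (x, y) :: h' => sX pre x * sY pre y * hprob sX sY (rcons pre (x, y)) h'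
  end.

Definition stage_exp (R : realType) (SX SY : finType) (phi : SX -> SY -> R)
  (sX : strategy R SX SY SX) (sY : strategy R SX SY SY) (t : nat) : R :=
  \sum_(h : (t.+1).-tuple (SX * SY)%type)
     hprob sX sY [::] h * phi (tnth h ord_max).1 (tnth h ord_max).2.

(* (phi,lambda)-autocratic: for every behavioral strategy of Y, the expected
   normalized discounted sum (1-lambda) sum_t lambda^t phi(s^t) is 0.
   Since phi is bounded and lambda<1, this expectation equals the series
   of expected stage payoffs; we require that series to converge to 0. *)
Definition disc_partial (R : realType) (SX SY : finType) (phi : SX -> SY -> R)
  (lam : R) (sX : strategy R SX SY SX) (sY : strategy R SX SY SY) (n : nat) : R :=
  \sum_(t < n) (1 - lam) * lam ^+ t * stage_exp phi sX sY t.

Definition autocratic (R : realType) (SX SY : finType) (phi : SX -> SY -> R)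
  (lam : R) (sX : strategy R SX SY SX) : Prop :=
  forall sY : strategy R SX SY SY,
    disc_partial phi lam sX sY @ \oo --> 0.

Definition opp_conditioned (R : realType) (SX SY : finType)
  (f : seq SY -> distr R SX) : strategy R SX SY SX :=
  fun h => f (map snd h).

From Pilot Require Import Defs.
From mathcomp Require Import all_boot all_order all_algebra.
From mathcomp Require Import all_classical all_reals all_analysis.
From mathcomp Require Import ring.
Import Order.TTheory GRing.Theory Num.Theory.
Set Implicit Arguments. Unset Strict Implicit.
Local Open Scope ring_scope.

(** Let X replace its own past moves by their conditional law: after Y has
   played [ys], the opponent-conditioned strategy plays the average of
   [sX (zip xs ys)] over X's possible past moves [xs], weighted by the
   probability [sX] gives to [xs] along [ys].  Against any [sY], the round-[t]
   law of action pairs is then the same as in the play of [sX] against the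
   strategy of Y that averages [sY] over the posterior law of X's past moves
   given Y's own.  Both plays therefore have the same discounted payoff
   sums, and autocracy of [sX] against that strategy transfers. *)

Section SizedSums.
Variables (V : nmodType) (T : finType).

Lemma big_tuple_rcons n (G : n.+1.-tuple T -> V) :
  \sum_(h : n.+1.-tuple T) G h = \sum_(s : n.-tuple T) \sum_(p : T) G (rcons_tuple s p).
Proof.
rewrite pair_big /=.
pose unrcons (h : n.+1.-tuple T) :=
  (belast_tuple (thead h) (behead_tuple h), last (thead h) (behead h)).
rewrite (reindex (fun sp : n.-tuple T * T => rcons_tuple sp.1 sp.2)) //.
exists unrcons => [[s p] _ | h _]; last first.
  by apply: val_inj; case/tupleP: h => x t /=; rewrite -lastI.
case: s => [[|a s] size_s]; congr pair; try apply: val_inj;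
  by rewrite /= ?belast_rcons ?last_rcons.
Qed.

Definition sum_size n (F : seq T -> V) : V := \sum_(s : n.-tuple T) F s.

Lemma sum_size0 (F : seq T -> V) : sum_size 0 F = F [::].
Proof.
rewrite /sum_size (eq_bigr (fun _ => F [::])); last first.
  by move=> s _; rewrite (size0nil (size_tuple s)).
by rewrite sumr_const card_tuple expn0.
Qed.

Lemma sum_sizeS n (F : seq T -> V) :
  sum_size n.+1 F = sum_size n (fun s => \sum_p F (rcons s p)).
Proof. exact: big_tuple_rcons. Qed.

Lemma eq_sum_size n (F G : seq T -> V) :
  (forall s, size s = n -> F s = G s) -> sum_size n F = sum_size n G.
Proof. by move=> FG; apply: eq_bigr => s _; rewrite FG ?size_tuple. Qed.

End SizedSums.

Lemma sum_size_ge0 (R : numDomainType) (T : finType) n (F : seq T -> R) :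
  (forall s, size s = n -> 0 <= F s) -> 0 <= sum_size n F.
Proof. by move=> F_ge0; apply: sumr_ge0 => s _; rewrite F_ge0 ?size_tuple. Qed.

Lemma sum_size_zip (V : nmodType) (SX SY : finType) n (F : seq (SX * SY) -> V) :
  sum_size n F = sum_size n (fun ys => sum_size n (fun xs => F (zip xs ys))).
Proof.
suff -> : sum_size n F = sum_size n (fun xs => sum_size n (fun ys => F (zip xs ys))).
  exact: exchange_big.
elim: n F => [|n IH] F; first by rewrite !sum_size0.
rewrite sum_sizeS IH sum_sizeS; apply: eq_sum_size => xs size_xs.
under [RHS]eq_bigr do rewrite sum_sizeS.
rewrite /sum_size [RHS]exchange_big /=; apply: eq_bigr => ys _.
rewrite pair_big /=; apply: eq_bigr => -[x y] _ /=.
by rewrite zip_rcons // !size_tuple.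
Qed.

Section HistoryWeight.
Variables (R : numDomainType) (SX SY : finType).
Implicit Types (a : history SX SY -> SX -> R) (b : history SX SY -> SY -> R).

Fixpoint hweight a b (pre h : history SX SY) : R :=
  match h with
  | [::] => 1
  | (x, y) :: h' => a pre x * b pre y * hweight a b (rcons pre (x, y)) h'
  end.

Lemma hweight_rcons a b pre h p :
  hweight a b pre (rcons h p) = hweight a b pre h * a (pre ++ h) p.1 * b (pre ++ h) p.2.
Proof.
elim: h pre => [|[x y] h IH] pre /=.
  by case: p => x y /=; rewrite cats0 !mulr1 mul1r.
by rewrite IH cat_rcons !mulrA.
Qed.

Lemma hweight_split a b pre h :
  hweight a b pre h = hweight a (fun _ _ => 1) pre h * hweight (fun _ _ => 1) b pre h.
Proof.
elim: h pre => [|[x y] h IH] pre /=; first by rewrite mulr1.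
by rewrite IH; ring.
Qed.

Lemma hweight_ge0 a b pre h :
  (forall k x, 0 <= a k x) -> (forall k y, 0 <= b k y) -> 0 <= hweight a b pre h.
Proof.
move=> a_ge0 b_ge0; elim: h pre => [|[x y] h IH] pre /=; first exact: ler01.
by rewrite !mulr_ge0.
Qed.

End HistoryWeight.

Lemma hprob_hweight (R : realType) (SX SY : finType)
    (sX : strategy R SX SY SX) (sY : strategy R SX SY SY) pre h :
  hprob sX sY pre h = hweight (fun k => sX k) (fun k => sY k) pre h.
Proof. by elim: h pre => [|[x y] h IH] pre //=; rewrite IH. Qed.

Lemma stage_exp_hweight (R : realType) (SX SY : finType) (phi : SX -> SY -> R)
    (sX : strategy R SX SY SX) (sY : strategy R SX SY SY) t :
  stage_exp phi sX sY t = sum_size t (fun h =>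
    \sum_p hweight (fun k => sX k) (fun k => sY k) [::] (rcons h p) * phi p.1 p.2).
Proof.
rewrite /stage_exp big_tuple_rcons; apply: eq_bigr => h _; apply: eq_bigr => p _.
by rewrite hprob_hweight (tnth_nth p) /= nth_rcons size_tuple ltnn eqxx.
Qed.

Lemma map_snd_zip (A B : Type) (xs : seq A) (ys : seq B) :
  size xs = size ys -> map snd (zip xs ys) = ys.
Proof. by move=> size_xy; rewrite -/(unzip2 _) unzip2_zip // size_xy. Qed.

Section Averaging.
Variables (R : realType) (SX SY : finType) (sX : strategy R SX SY SX).

Definition own_prob (h : history SX SY) : R :=
  hweight (fun k => sX k) (fun _ _ => 1) [::] h.

Lemma sum_own_prob n ys :
  size ys = n -> sum_size n (fun xs => own_prob (zip xs ys)) = 1.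
Proof.
elim: n ys => [|n IH] ys size_ys; first by rewrite sum_size0 (size0nil size_ys).
case/lastP: ys size_ys => // ys y; rewrite size_rcons => -[size_ys].
rewrite sum_sizeS -(IH ys size_ys); apply: eq_sum_size => xs size_xs.
under eq_bigr do rewrite zip_rcons ?size_xs // /own_prob hweight_rcons /= mulr1.
by rewrite -big_distrr /= Defs.pmf_sum1 mulr1.
Qed.

Definition marginal_pmf (ys : seq SY) (x : SX) : R :=
  sum_size (size ys) (fun xs => own_prob (zip xs ys) * sX (zip xs ys) x).

Lemma marginal_pmf_ge0 ys x : 0 <= marginal_pmf ys x.
Proof.
apply: sum_size_ge0 => xs _; rewrite mulr_ge0 ?Defs.pmf_ge0 //.
by apply: hweight_ge0 => *; rewrite ?Defs.pmf_ge0 ?ler01.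
Qed.

Lemma marginal_pmf_sum1 ys : \sum_x marginal_pmf ys x = 1.
Proof.
rewrite /marginal_pmf /sum_size exchange_big /= -(sum_own_prob (erefl (size ys))).
by apply: eq_bigr => xs _; rewrite -big_distrr /= Defs.pmf_sum1 mulr1.
Qed.

Definition marginal (ys : seq SY) : distr R SX :=
  Distr (marginal_pmf_ge0 ys) (marginal_pmf_sum1 ys).

Variable sY : strategy R SX SY SY.

Definition joint_prob (h : history SX SY) : R :=
  hweight (fun k => opp_conditioned marginal k) (fun k => sY k) [::] h.

Definition ys_prob (ys : seq SY) : R :=
  sum_size (size ys) (fun xs => joint_prob (zip xs ys)).

Definition ys_next_prob (ys : seq SY) (y : SY) : R :=
  sum_size (size ys) (fun xs => joint_prob (zip xs ys) * sY (zip xs ys) y).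

Lemma joint_prob_ge0 h : 0 <= joint_prob h.
Proof. by apply: hweight_ge0 => *; apply: Defs.pmf_ge0. Qed.

Lemma ys_prob_ge0 ys : 0 <= ys_prob ys.
Proof. by apply: sum_size_ge0 => *; apply: joint_prob_ge0. Qed.

Lemma ys_next_prob_ge0 ys y : 0 <= ys_next_prob ys y.
Proof. by apply: sum_size_ge0 => *; rewrite mulr_ge0 ?joint_prob_ge0 ?Defs.pmf_ge0. Qed.

Lemma sum_ys_next_prob ys : \sum_y ys_next_prob ys y = ys_prob ys.
Proof.
rewrite /ys_next_prob /sum_size exchange_big /=; apply: eq_bigr => xs _.
by rewrite -big_distrr /= Defs.pmf_sum1 mulr1.
Qed.

Lemma ys_prob_rcons ys y : ys_prob (rcons ys y) = ys_next_prob ys y.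
Proof.
rewrite /ys_prob size_rcons sum_sizeS; apply: eq_sum_size => xs size_xs.
under eq_bigr do rewrite zip_rcons ?size_xs // /joint_prob hweight_rcons /=.
by rewrite -big_distrl -big_distrr /= marginal_pmf_sum1 mulr1.
Qed.

(* On Y-histories of probability zero the posterior is undefined; any
   distribution would do, and we fall back to [sY]. *)
Definition posterior_pmf (h : history SX SY) (y : SY) : R :=
  let ys := map snd h in
  if ys_prob ys == 0 then sY h y else ys_next_prob ys y / ys_prob ys.

Lemma posterior_pmf_ge0 h y : 0 <= posterior_pmf h y.
Proof.
rewrite /posterior_pmf; case: eqP => _; first exact: Defs.pmf_ge0.
by rewrite divr_ge0 ?ys_next_prob_ge0 ?ys_prob_ge0.
Qed.

Lemma posterior_pmf_sum1 h : \sum_y posterior_pmf h y = 1.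
Proof.
rewrite /posterior_pmf; case: eqP => [_ | /eqP ys_prob_neq0].
  exact: Defs.pmf_sum1.
by rewrite -big_distrl /= sum_ys_next_prob divff.
Qed.

Definition posterior : strategy R SX SY SY :=
  fun h => Distr (posterior_pmf_ge0 h) (posterior_pmf_sum1 h).

Lemma ys_next_prob_posterior h y :
  ys_next_prob (map snd h) y = ys_prob (map snd h) * posterior h y.
Proof.
rewrite /= /posterior_pmf; case: eqP => [ys_prob0 | /eqP ys_prob_neq0].
  rewrite ys_prob0 mul0r; move: ys_prob0; rewrite -sum_ys_next_prob.
  by move/psumr_eq0P; apply=> // z _; apply: ys_next_prob_ge0.
by rewrite mulrC divfK.
Qed.

Lemma hweight_posterior h :
  hweight (fun _ _ => 1) (fun k => posterior k) [::] h = ys_prob (map snd h).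
Proof.
elim/last_ind: h => [|h [x y] IH]; first by rewrite /ys_prob sum_size0.
by rewrite hweight_rcons IH map_rcons ys_prob_rcons ys_next_prob_posterior /=; ring.
Qed.

Variable phi : SX -> SY -> R.

Definition stage_value (t : nat) : R :=
  sum_size t (fun ys => \sum_x \sum_y marginal ys x * phi x y * ys_next_prob ys y).

Lemma stage_exp_marginal t :
  stage_exp phi (opp_conditioned marginal) sY t = stage_value t.
Proof.
rewrite stage_exp_hweight sum_size_zip; apply: eq_sum_size => ys size_ys.
transitivity (sum_size t (fun xs => \sum_x \sum_y
   marginal ys x * phi x y * (joint_prob (zip xs ys) * sY (zip xs ys) y))).
  apply: eq_sum_size => xs size_xs; rewrite pair_big; apply: eq_bigr => -[x y] _ /=.
  rewrite hweight_rcons /opp_conditioned /= map_snd_zip ?size_xs ?size_ys //.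
  by rewrite /joint_prob /=; ring.
rewrite /sum_size exchange_big; apply: eq_bigr => x _.
rewrite exchange_big; apply: eq_bigr => y _.
by rewrite /ys_next_prob size_ys -big_distrr.
Qed.

Lemma stage_exp_posterior t : stage_exp phi sX posterior t = stage_value t.
Proof.
rewrite stage_exp_hweight sum_size_zip; apply: eq_sum_size => ys size_ys.
transitivity (sum_size t (fun xs => \sum_x \sum_y
   own_prob (zip xs ys) * sX (zip xs ys) x * phi x y * ys_next_prob ys y)).
  apply: eq_sum_size => xs size_xs; rewrite pair_big; apply: eq_bigr => -[x y] _ /=.
  have unzip_ys : map snd (zip xs ys) = ys by rewrite map_snd_zip ?size_xs.
  have := ys_next_prob_posterior (zip xs ys) y; rewrite unzip_ys => ->.
  rewrite hweight_rcons hweight_split hweight_posterior unzip_ys /own_prob /=.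
  by ring.
rewrite /sum_size exchange_big; apply: eq_bigr => x _.
rewrite exchange_big; apply: eq_bigr => y _.
by rewrite /= /marginal_pmf size_ys !big_distrl.
Qed.

Lemma disc_partial_marginal lam :
  disc_partial phi lam (opp_conditioned marginal) sY = disc_partial phi lam sX posterior.
Proof.
apply: funext => n; apply: eq_bigr => t _.
by rewrite stage_exp_marginal stage_exp_posterior.
Qed.

End Averaging.

Theorem proposition3 (R : realType) (SX SY : finType)
  (hX : (0 < #|SX|)%N) (hY : (0 < #|SY|)%N)
  (phi : SX -> SY -> R) (lam : R) (hlam0 : 0 <= lam) (hlam1 : lam < 1)
  (sX : strategy R SX SY SX) :
  autocratic phi lam sX ->
  exists f : seq SY -> distr R SX, autocratic phi lam (opp_conditioned f).
Proof.
(* The two plays below have equal discounted partial sums for every [lam]. *)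
move=> sX_autocratic; exists (marginal sX) => sY.
rewrite disc_partial_marginal; exact: sX_autocratic.
Qed.
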